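(* Assume $f\in C^{m+1}[-1,1]$ and $\max_{|x|\le1}|f^{(m+1)}(x)|\le A$ for a constant $A>0$ independent of $m$. For each arbitrary integration node $x_k\in[-1,1]$, let $\int_{-1}^{x_k}f(x)\,dx$ be approximated by the optimal barycentric Gegenbauer quadrature $\sum_{i=0}^m p_{OB,k,i}^{(1)}f(z_{m,k,i}^{(\alpha_k^* )})$. Then, as $m\to\infty$, the optimal barycentric Gegenbauer quadrature converges to the barycentric Chebyshev quadrature, in the sense that for every $k$, $$\sum_{i=0}^m p_{OB,k,i}^{(1)}\,f\big(z_{m,k,i}^{(\alpha_k^* )}\big)-\sum_{i=0}^m p_{B,k,i}^{(1)}\,f\big(x_{m,i}^{(0)}\big)\longrightarrow 0\quad(m\to\infty).$$
   Context: For $\alpha>-1/2$ and integer $n\ge0$, the Gegenbauer polynomial $G_n^{(\alpha)}$ is the Jacobi polynomial $P_n^{(\alpha-1/2,\alpha-1/2)}$ normalized so that $G_n^{(\alpha)}(1)=1$ (for $\alpha=0$ this is the Chebyshev polynomial $T_n$); $K_n^{(\alpha)}$ denotes its leading coefficient. For a node $x_k$, $\eta_{k,m}(\alpha)=\frac{2^m}{K_{m+1}^{(\alpha)}}\int_{-1}^{x_k}G_{m+1}^{(\alpha)}(x)\,dx$, $\alpha_k^*=\operatorname{argmin}_{\alpha>-1/2}\eta_{k,m}^2(\alpha)$, the adjoint GG nodes $z_{m,k,i}^{(\alpha_k^* )}$, $i=0,\dots,m$, are the zeros of $G_{m+1}^{(\alpha_k^* )}$, and $p_{OB,k,i}^{(1)}=\int_{-1}^{x_k}\ell_{k,i}(x)\,dx$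 with $\ell_{k,i}$ the degree-$m$ Lagrange basis polynomial at these nodes. The Chebyshev–Gauss nodes $x_{m,i}^{(0)}$, $i=0,\dots,m$, are the zeros of $T_{m+1}$, and $p_{B,k,i}^{(1)}=\int_{-1}^{x_k}\ell_i^{(0)}(x)\,dx$ with $\ell_i^{(0)}$ the degree-$m$ Lagrange basis polynomial at the Chebyshev–Gauss nodes. *)

From Stdlib Require Import Reals Lra ClassicalEpsilon.
Open Scope R_scope.

Fixpoint rising (a : R) (j : nat) : R :=
  match j with
  | O => 1
  | S j' => rising a j' * (a + INR j')
  end.

(* Gegenbauer polynomial G_n^{(alpha)} = P_n^{(alpha-1/2,alpha-1/2)} / P_n^{(alpha-1/2,alpha-1/2)}(1),
   written via the standard explicit Jacobi formula
   P_n^{(a,b)}(x)/P_n^{(a,b)}(1) = sum_j C(n,j) (a+b+n+1)_j/(a+1)_j ((x-1)/2)^j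
   with a = b = alpha - 1/2. *)
Definition Gegen (n : nat) (alpha x : R) : R :=
  sum_f_R0 (fun j => C n j * rising (2 * alpha + INR n) j
                     / rising (alpha + / 2) j * ((x - 1) / 2) ^ j) n.

(* leading coefficient K_n^{(alpha)} of Gegen n alpha (coefficient of x^n,
   coming only from the j = n term above) *)
Definition Klead (n : nat) (alpha : R) : R :=
  rising (2 * alpha + INR n) n / (rising (alpha + / 2) n * 2 ^ n).

(* Riemann integral of f from a to b (the value of RiemannInt when f is
   Riemann integrable; all integrands used here are polynomials). *)
Definition Rint (f : R -> R) (a b : R) : R :=
  epsilon (inhabits 0)
    (fun I => exists pr : Riemann_integrable f a b, RiemannInt pr = I).

Definition eta (m : nat) (alpha xk : R) : R :=
  2 ^ m / Klead (S m) alpha * Rint (Gegen (S m) alpha) (-1) xk.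

Definition is_argmin_eta (m : nat) (xk a : R) : Prop :=
  -1/2 < a /\ forall b, -1/2 < b -> (eta m a xk) ^ 2 <= (eta m b xk) ^ 2.

Definition zeros_of (n : nat) (alpha : R) (z : nat -> R) : Prop :=
  (forall i j, (i < n)%nat -> (j < n)%nat -> i <> j -> z i <> z j) /\
  (forall i, (i < n)%nat -> Gegen n alpha (z i) = 0).

Definition lagrange (z : nat -> R) (m i : nat) (x : R) : R :=
  prod_f_R0 (fun j => if Nat.eq_dec j i then 1 else (x - z j) / (z i - z j)) m.

Definition qweight (z : nat -> R) (m i : nat) (xk : R) : R :=
  Rint (lagrange z m i) (-1) xk.

Definition deriv_on (g dg : R -> R) : Prop :=
  forall x, -1 <= x <= 1 ->
    limit1_in (fun y => (g y - g x) / (y - x))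
              (fun y => -1 <= y <= 1 /\ y <> x) (dg x) x.

(* Both quadratures are interpolatory: each equals the integral over [-1, x_k]
   of the degree-m Lagrange interpolant of f at its nodes.  For alpha > -1/2 all
   zeros of G_{m+1}^{(alpha)} lie in (-1, 1): in hypergeometric form the
   polynomial is positive for x >= 1 and has sign (-1)^n for x <= -1
   (Chu--Vandermonde at x = -1, then the mean value theorem, by induction on n).
   Cauchy's remainder formula then bounds both interpolation errors on (-1, 1)
   by A 2^{m+1} / (m+1)!, so the two quadratures differ by at most
   2 (x_k + 1) A 2^{m+1} / (m+1)!, which tends to 0. *)

From Stdlib Require Import Reals Lra Lia List Sorted Permutation Classical ClassicalEpsilon.
From Coquelicot Require Import Coquelicot.
Import ListNotations.
Open Scope R_scope.

Lemma rising_gt0 a j : 0 < a -> 0 < rising a j.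
Proof.
  intro Ha; induction j as [|j IH]; simpl; [lra|].
  apply Rmult_lt_0_compat; [exact IH|]. pose proof (pos_INR j); lra.
Qed.

Lemma rising_ge0 a j : 0 <= a -> 0 <= rising a j.
Proof.
  intro Ha; induction j as [|j IH]; simpl; [lra|].
  apply Rmult_le_pos; [exact IH|]. pose proof (pos_INR j); lra.
Qed.

Lemma risingSl a j : rising a (S j) = a * rising (a + 1) j.
Proof.
  induction j as [|j IH]; [simpl; ring|].
  change (rising a (S (S j))) with (rising a (S j) * (a + INR (S j))).
  rewrite IH. simpl rising at 2. rewrite S_INR. ring.
Qed.

Lemma rising_alt_sign_gt0 k a : a + INR k < 0 -> 0 < (-1) ^ S k * rising a (S k).
Proof.
  revert a; induction k as [|k IH]; intros a Ha; [simpl in *; lra|].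
  rewrite S_INR in Ha.
  change (rising a (S (S k))) with (rising a (S k) * (a + INR (S k))).
  replace ((-1) ^ S (S k) * (rising a (S k) * (a + INR (S k))))
    with (((-1) ^ S k * rising a (S k)) * - (a + INR (S k))) by (simpl; ring).
  apply Rmult_lt_0_compat; [apply IH; lra|]. rewrite S_INR; lra.
Qed.

Lemma binom_n_0 n : Binomial.C n 0 = 1.
Proof. unfold Binomial.C. rewrite Nat.sub_0_r. simpl. field. apply INR_fact_neq_0. Qed.

Lemma binom_n_n n : Binomial.C n n = 1.
Proof. unfold Binomial.C. rewrite Nat.sub_diag. simpl. field. apply INR_fact_neq_0. Qed.

Lemma binom_ge0 n j : 0 <= Binomial.C n j.
Proof.
  unfold Binomial.C, Rdiv. apply Rmult_le_pos; [apply pos_INR|].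
  left; apply Rinv_0_lt_compat, Rmult_lt_0_compat; apply INR_fact_lt_0.
Qed.

Lemma binomSS n j : (j <= n)%nat ->
  INR (S j) * Binomial.C (S n) (S j) = INR (S n) * Binomial.C n j.
Proof.
  intro Hj. unfold Binomial.C. replace (S n - S j)%nat with (n - j)%nat by lia.
  rewrite !fact_simpl, !mult_INR.
  field. repeat split; try apply INR_fact_neq_0. apply not_0_INR; lia.
Qed.

Lemma sum_binomS (t : nat -> R) n :
  sum_f_R0 (fun j => Binomial.C (S n) j * t j) (S n) =
  sum_f_R0 (fun j => Binomial.C n j * t j) n
  + sum_f_R0 (fun j => Binomial.C n j * t (S j)) n.
Proof.
  destruct n as [|n].
  - simpl. rewrite binom_n_0, binom_n_n. unfold Binomial.C; simpl. field.
  - rewrite (decomp_sum _ (S (S n))), (decomp_sum (fun j => _ * t j) (S n)) by lia.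
    simpl pred. rewrite tech5, (tech5 (fun j => Binomial.C (S n) j * t (S j))).
    rewrite !binom_n_0, !binom_n_n.
    rewrite (sum_eq _ (fun i => Binomial.C (S n) (S i) * t (S i)
                                + Binomial.C (S n) i * t (S i))).
    + rewrite plus_sum. ring.
    + intros i Hi. rewrite <- pascal by lia. ring.
Qed.

(* [hyp n b c u] is the terminating hypergeometric sum 2F1(-n, b; c; -u). *)
Definition hyp (n : nat) (b c u : R) : R :=
  sum_f_R0 (fun j => Binomial.C n j * rising b j / rising c j * u ^ j) n.

Lemma hyp0 b c u : hyp 0 b c u = 1.
Proof. unfold hyp; simpl. rewrite binom_n_0. field. Qed.

Lemma hypS n b c u : 0 < c ->
  hyp (S n) b c u = hyp n b c u + u * (b / c) * hyp n (b + 1) (c + 1) u.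
Proof.
  intro Hc. unfold hyp.
  rewrite (sum_eq _ (fun j => Binomial.C (S n) j * (rising b j / rising c j * u ^ j)))
    by (intros; unfold Rdiv; ring).
  rewrite sum_binomS. f_equal; [apply sum_eq; intros; unfold Rdiv; ring|].
  rewrite scal_sum. apply sum_eq; intros i _.
  rewrite !risingSl. simpl pow.
  assert (0 < rising (c + 1) i) by (apply rising_gt0; lra).
  field. split; lra.
Qed.

Lemma hyp_m1 n : forall b c, 0 < c -> hyp n b c (-1) = rising (c - b) n / rising c n.
Proof.
  induction n as [|n IH]; intros b c Hc; [rewrite hyp0; simpl; field|].
  rewrite hypS, !IH by lra.
  replace (c + 1 - (b + 1)) with (c - b) by ring.
  assert (0 < rising (c + 1) n) by (apply rising_gt0; lra).
  assert (Ec : rising c n = c * rising (c + 1) n / (c + INR n)).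
  { rewrite <- risingSl. simpl. pose proof (pos_INR n). field. lra. }
  rewrite (risingSl c n), Ec. simpl rising. pose proof (pos_INR n). field. repeat split; lra.
Qed.

Lemma poly_derivable_pt_lim (a : nat -> R) n u :
  derivable_pt_lim (fun u => sum_f_R0 (fun j => a j * u ^ j) (S n)) u
    (sum_f_R0 (fun j => a (S j) * INR (S j) * u ^ j) n).
Proof.
  assert (Hmon : forall k, derivable_pt_lim (fun u => a k * u ^ k) u (a k * (INR k * u ^ pred k)))
    by (intro k; apply (derivable_pt_lim_scal (fun u => u ^ k)), derivable_pt_lim_pow).
  induction n as [|n IH].
  - change (derivable_pt_lim (fun u => a 0%nat * u ^ 0 + a 1%nat * u ^ 1) u
      (a 1%nat * INR 1 * u ^ 0)).
    replace (a 1%nat * INR 1 * u ^ 0) with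
      (a 0%nat * (INR 0 * u ^ pred 0) + a 1%nat * (INR 1 * u ^ pred 1)) by (simpl; ring).
    apply (derivable_pt_lim_plus (fun u => a 0%nat * u ^ 0) (fun u => a 1%nat * u ^ 1)); apply Hmon.
  - change (derivable_pt_lim (fun u => sum_f_R0 (fun j => a j * u ^ j) (S n)
                                       + a (S (S n)) * u ^ S (S n)) u
      (sum_f_R0 (fun j => a (S j) * INR (S j) * u ^ j) n
       + a (S (S n)) * INR (S (S n)) * u ^ S n)).
    replace (a (S (S n)) * INR (S (S n)) * u ^ S n)
      with (a (S (S n)) * (INR (S (S n)) * u ^ pred (S (S n)))) by (simpl; ring).
    apply (derivable_pt_lim_plus _ (fun u => a (S (S n)) * u ^ S (S n))); [exact IH|apply Hmon].
Qed.

Lemma hyp_derivable_pt_lim n b c u : 0 < c ->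
  derivable_pt_lim (hyp (S n) b c) u (INR (S n) * b / c * hyp n (b + 1) (c + 1) u).
Proof.
  intro Hc. unfold hyp.
  replace (INR (S n) * b / c * _) with
    (sum_f_R0 (fun j => Binomial.C (S n) (S j) * rising b (S j) / rising c (S j)
                        * INR (S j) * u ^ j) n);
    [apply (poly_derivable_pt_lim (fun j => Binomial.C (S n) j * rising b j / rising c j))|].
  rewrite scal_sum. apply sum_eq. intros i Hi.
  rewrite !risingSl.
  assert (0 < rising (c + 1) i) by (apply rising_gt0; lra).
  replace (Binomial.C (S n) (S i) * (b * rising (b + 1) i) / (c * rising (c + 1) i)
           * INR (S i) * u ^ i)
    with (INR (S i) * Binomial.C (S n) (S i) * (b * rising (b + 1) i) / (c * rising (c + 1) i)
          * u ^ i) by (field; split; lra).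
  rewrite binomSS by exact Hi. field. split; lra.
Qed.

Lemma hyp_gt0 n b c u : 0 < c -> 0 < b -> 0 <= u -> 0 < hyp n b c u.
Proof.
  intros Hc Hb Hu. unfold hyp.
  apply Rlt_le_trans with (Binomial.C n 0 * rising b 0 / rising c 0 * u ^ 0).
  - rewrite binom_n_0. simpl. lra.
  - rewrite <- (Rplus_0_r (_ * u ^ 0)). destruct n as [|n]; [simpl; lra|].
    rewrite decomp_sum by lia. apply Rplus_le_compat_l.
    apply cond_pos_sum. intro i. apply Rmult_le_pos; [|apply pow_le; lra].
    unfold Rdiv. apply Rmult_le_pos; [apply Rmult_le_pos|].
    + apply binom_ge0.
    + apply rising_ge0; lra.
    + left; apply Rinv_0_lt_compat, rising_gt0; lra.
Qed.

(* Induction on [n] through the derivative, anchored at [u = -1] by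
   Chu--Vandermonde. *)
Lemma hyp_sign_le_m1 n : forall c, 0 < c -> forall u, u <= -1 ->
  0 < (-1) ^ n * hyp n (INR n + 2 * c - 1) c u.
Proof.
  induction n as [|n IH]; intros c Hc u Hu; [rewrite hyp0; simpl; lra|].
  set (B := INR (S n) + 2 * c - 1).
  assert (HB : 0 < B) by (unfold B; rewrite S_INR; pose proof (pos_INR n); lra).
  set (g := fun v => (-1) ^ S n * hyp (S n) B c v).
  set (g' := fun v => (-1) ^ S n * (INR (S n) * B / c * hyp n (B + 1) (c + 1) v)).
  assert (Hg_m1 : 0 < g (-1)).
  { unfold g. rewrite hyp_m1 by lra.
    replace (c - B) with (- c - INR n) by (unfold B; rewrite S_INR; ring).
    assert (0 < rising c (S n)) by (apply rising_gt0; lra).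
    replace ((-1) ^ S n * (rising (- c - INR n) (S n) / rising c (S n))) with
      (((-1) ^ S n * rising (- c - INR n) (S n)) / rising c (S n)) by (field; lra).
    apply Rdiv_lt_0_compat; [apply rising_alt_sign_gt0; lra|assumption]. }
  assert (Hg' : forall v, v <= -1 -> g' v < 0).
  { intros v Hv. unfold g'.
    replace (B + 1) with (INR n + 2 * (c + 1) - 1) by (unfold B; rewrite S_INR; ring).
    assert (H1 := IH (c + 1) ltac:(lra) v Hv).
    assert (0 < INR (S n) * B / c).
    { apply Rdiv_lt_0_compat; [apply Rmult_lt_0_compat; [apply lt_0_INR; lia|]|]; lra. }
    simpl pow. nra. }
  destruct (Req_dec u (-1)) as [->|Hne]; [exact Hg_m1|].
  destruct (MVT_cor2 g g' u (-1)) as [xi [Hxi1 Hxi2]]; [lra| |].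
  - intros v _. apply (derivable_pt_lim_scal (hyp (S n) B c)), hyp_derivable_pt_lim. lra.
  - assert (g' xi < 0) by (apply Hg'; lra).
    change (0 < g u). nra.
Qed.

Lemma Gegen_root_interior n al x : -1/2 < al -> Gegen n al x = 0 -> -1 < x < 1.
Proof.
  intros Hal H0.
  change (hyp n (2 * al + INR n) (al + / 2) ((x - 1) / 2) = 0) in H0.
  replace (2 * al + INR n) with (INR n + 2 * (al + / 2) - 1) in H0 by field.
  split.
  - apply Rnot_le_lt. intro Hx.
    assert (H := hyp_sign_le_m1 n (al + / 2) ltac:(lra) ((x - 1) / 2) ltac:(lra)).
    rewrite H0, Rmult_0_r in H. lra.
  - apply Rnot_le_lt. intro Hx. destruct n as [|n]; [rewrite hyp0 in H0; lra|].
    assert (0 < hyp (S n) (INR (S n) + 2 * (al + / 2) - 1) (al + / 2) ((x - 1) / 2)).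
    { apply hyp_gt0; [lra| |lra]. rewrite S_INR. pose proof (pos_INR n). lra. }
    lra.
Qed.

(* A polynomial of degree at most [d] is encoded by the one property the
   interpolation argument needs: it has a chain of derivatives vanishing
   from order [d + 1] on. *)
Definition deriv_chain (D : nat -> R -> R) : Prop :=
  forall n x, derivable_pt_lim (D n) x (D (S n) x).

Definition poly_le (d : nat) (g : R -> R) : Prop :=
  exists D, deriv_chain D /\ (forall x, D 0%nat x = g x) /\
            (forall k x, (d < k)%nat -> D k x = 0).

Definition poly_le_dn (d : nat) (g : R -> R) (lc : R) : Prop :=
  exists D, deriv_chain D /\ (forall x, D 0%nat x = g x) /\ (forall x, D d x = lc) /\
            (forall k x, (d < k)%nat -> D k x = 0).

Definition const_chain (c : R) (n : nat) (x : R) : R :=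
  match n with O => c | S _ => 0 end.

Lemma deriv_chain_const c : deriv_chain (const_chain c).
Proof. intros [|n] x; apply derivable_pt_lim_const. Qed.

(* Leibniz rule for the product with a linear factor. *)
Definition mul_lin_chain (Q : nat -> R -> R) (a b : R) (n : nat) (x : R) : R :=
  Q n x * (a * x + b) + INR n * a * Q (pred n) x.

Lemma deriv_chain_mul_lin Q a b : deriv_chain Q -> deriv_chain (mul_lin_chain Q a b).
Proof.
  intros HQ n x. unfold mul_lin_chain.
  assert (Hlin : derivable_pt_lim (fun x => a * x + b) x a).
  { assert (H : derivable_pt_lim (fun x => a * x + b) x (a * 1 + 0)).
    { apply (derivable_pt_lim_plus (fun x => a * x) (fun _ => b));
        [apply (derivable_pt_lim_scal id), derivable_pt_lim_id|apply derivable_pt_lim_const]. }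
    now rewrite Rmult_1_r, Rplus_0_r in H. }
  replace (Q (S n) x * (a * x + b) + INR (S n) * a * Q (pred (S n)) x) with
    ((Q (S n) x * (a * x + b) + Q n x * a) + INR n * a * Q (S (pred n)) x)
    by (destruct n as [|n]; simpl pred; rewrite ?S_INR; simpl INR; ring).
  apply (derivable_pt_lim_plus (fun x => Q n x * (a * x + b))).
  - apply (derivable_pt_lim_mult (Q n) (fun x => a * x + b)); [apply HQ|exact Hlin].
  - apply (derivable_pt_lim_scal (Q (pred n))), HQ.
Qed.

Lemma poly_le_ext d g h : (forall x, g x = h x) -> poly_le d g -> poly_le d h.
Proof. intros E [D [HD [H0 Hk]]]. exists D. repeat split; auto. intro x; rewrite H0; auto. Qed.

Lemma poly_le_mono d d' g : (d <= d')%nat -> poly_le d g -> poly_le d' g.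
Proof. intros Hd [D [HD [H0 Hk]]]. exists D. repeat split; auto. intros k x Hk'; apply Hk; lia. Qed.

Lemma poly_le_const c : poly_le 0 (fun _ => c).
Proof.
  exists (const_chain c). repeat split; [apply deriv_chain_const|].
  intros [|k] x Hk; [lia|reflexivity].
Qed.

Lemma poly_le_mul_lin d q a b : poly_le d q -> poly_le (S d) (fun x => q x * (a * x + b)).
Proof.
  intros [Q [HQ [H0 Hk]]]. exists (mul_lin_chain Q a b). unfold mul_lin_chain. repeat split.
  - apply deriv_chain_mul_lin, HQ.
  - intro x. simpl. rewrite H0. ring.
  - intros k x Hk'. rewrite !Hk by lia. ring.
Qed.

Lemma poly_le_add d g h : poly_le d g -> poly_le d h -> poly_le d (fun x => g x + h x).
Proof.
  intros [D [HD [HD0 HDk]]] [E [HE [HE0 HEk]]].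
  exists (fun n x => D n x + E n x). repeat split.
  - intros n x. apply (derivable_pt_lim_plus (D n) (E n)); auto.
  - intro x. rewrite HD0, HE0. reflexivity.
  - intros k x Hk. rewrite HDk, HEk by exact Hk. ring.
Qed.

Lemma poly_le_scal d g s : poly_le d g -> poly_le d (fun x => s * g x).
Proof.
  intros [D [HD [H0 Hk]]]. exists (fun n x => s * D n x). repeat split.
  - intros n x. apply (derivable_pt_lim_scal (D n)), HD.
  - intro x. rewrite H0. reflexivity.
  - intros k x Hk'. rewrite Hk by exact Hk'. ring.
Qed.

Lemma poly_le_sum d (F : nat -> R -> R) n :
  (forall i, (i <= n)%nat -> poly_le d (F i)) ->
  poly_le d (fun x => sum_f_R0 (fun i => F i x) n).
Proof.
  induction n as [|n IH]; intro H; simpl; [apply H; lia|].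
  apply (poly_le_add d (fun x => sum_f_R0 (fun i => F i x) n) (F (S n)));
    [apply IH; intros; apply H|apply H]; lia.
Qed.

Lemma poly_le_dn_const c : poly_le_dn 0 (fun _ => c) c.
Proof.
  exists (const_chain c). repeat split; [apply deriv_chain_const|].
  intros [|k] x Hk; [lia|reflexivity].
Qed.

Lemma poly_le_dn_mul_lin d q lc a b : poly_le_dn d q lc ->
  poly_le_dn (S d) (fun x => q x * (a * x + b)) (INR (S d) * a * lc).
Proof.
  intros [Q [HQ [H0 [Hd Hk]]]]. exists (mul_lin_chain Q a b). unfold mul_lin_chain. repeat split.
  - apply deriv_chain_mul_lin, HQ.
  - intro x. simpl. rewrite H0. ring.
  - intro x. simpl pred. rewrite Hd, Hk by lia. ring.
  - intros k x Hk'. rewrite !Hk by lia. ring.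
Qed.

Lemma poly_le_dn_ext d g h lc : (forall x, g x = h x) -> poly_le_dn d g lc -> poly_le_dn d h lc.
Proof.
  intros E [D [HD [H0 [Hd Hk]]]]. exists D. repeat split; auto. intro x; rewrite H0; auto.
Qed.

Definition lagrange_factor (z : nat -> R) (i j : nat) (x : R) : R :=
  if Nat.eq_dec j i then 1 else (x - z j) / (z i - z j).

Lemma poly_le_mul_lagrange_factor z i j q d : poly_le d q ->
  poly_le (if Nat.eq_dec j i then d else S d) (fun x => q x * lagrange_factor z i j x).
Proof.
  intro Hq. unfold lagrange_factor. destruct (Nat.eq_dec j i).
  - apply (poly_le_ext _ q); [intro; ring|exact Hq].
  - apply (poly_le_ext _ (fun x => q x * (/ (z i - z j) * x + - z j / (z i - z j))));
      [intro x; unfold Rdiv; ring|apply poly_le_mul_lin, Hq].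
Qed.

(* The [i]-th factor is constant, all others are linear. *)
Lemma poly_le_lagrange_gen z n i :
  poly_le (if Nat.leb i n then n else S n) (lagrange z n i).
Proof.
  induction n as [|n IH].
  - apply (poly_le_ext _ (fun x => 1 * lagrange_factor z i 0 x));
      [intro x; rewrite Rmult_1_l; reflexivity|].
    eapply poly_le_mono; [|apply poly_le_mul_lagrange_factor, poly_le_const].
    destruct i; simpl; lia.
  - apply (poly_le_ext _ (fun x => lagrange z n i x * lagrange_factor z i (S n) x));
      [reflexivity|].
    eapply poly_le_mono; [|apply poly_le_mul_lagrange_factor, IH].
    destruct (Nat.eq_dec (S n) i) as [<-|Hne].
    + rewrite Nat.leb_refl, (proj2 (Nat.leb_gt (S n) n)) by lia. lia.
    + destruct (Nat.leb i n) eqn:E; [apply Nat.leb_le in E|apply Nat.leb_gt in E];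
      destruct (Nat.leb i (S n)) eqn:E'; try (apply Nat.leb_le in E'); try (apply Nat.leb_gt in E');
      lia.
Qed.

Lemma poly_le_lagrange z n i : (i <= n)%nat -> poly_le n (lagrange z n i).
Proof.
  intro Hi. generalize (poly_le_lagrange_gen z n i). now rewrite (proj2 (Nat.leb_le i n) Hi).
Qed.

Definition node_poly (z : nat -> R) (n : nat) (x : R) : R := prod_f_R0 (fun j => x - z j) n.

Lemma poly_le_dn_node_poly z n : poly_le_dn (S n) (node_poly z n) (INR (Factorial.fact (S n))).
Proof.
  induction n as [|n IH].
  - apply (poly_le_dn_ext _ (fun x => 1 * (1 * x + - z 0%nat)));
      [intro x; unfold node_poly; simpl; ring|].
    replace (INR (Factorial.fact 1)) with (INR 1 * 1 * 1) by (simpl; ring).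
    apply poly_le_dn_mul_lin, poly_le_dn_const.
  - apply (poly_le_dn_ext _ (fun x => node_poly z n x * (1 * x + - z (S n))));
      [intro x; unfold node_poly; simpl; ring|].
    replace (INR (Factorial.fact (S (S n)))) with (INR (S (S n)) * 1 * INR (Factorial.fact (S n)))
      by (rewrite (fact_simpl (S n)), mult_INR; ring).
    apply poly_le_dn_mul_lin, IH.
Qed.

Lemma prod_f_R0_eq0 (F : nat -> R) n i : (i <= n)%nat -> F i = 0 -> prod_f_R0 F n = 0.
Proof.
  induction n as [|n IH]; intros Hi Hz.
  - replace i with 0%nat in Hz by lia. exact Hz.
  - simpl. destruct (Nat.eq_dec i (S n)) as [->|Hne];
      [rewrite Hz|rewrite IH by (exact Hz || lia)]; ring.
Qed.

Lemma prod_f_R0_eq1 (F : nat -> R) n : (forall i, (i <= n)%nat -> F i = 1) -> prod_f_R0 F n = 1.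
Proof.
  induction n as [|n IH]; intros H; simpl; [apply H; lia|].
  rewrite IH, H by (auto; lia). ring.
Qed.

Lemma prod_f_R0_neq0 (F : nat -> R) n :
  (forall i, (i <= n)%nat -> F i <> 0) -> prod_f_R0 F n <> 0.
Proof.
  induction n as [|n IH]; intros H; simpl; [apply H; lia|].
  apply Rmult_integral_contrapositive_currified; [apply IH; intros|]; apply H; lia.
Qed.

Lemma Rabs_prod_f_R0_le (F : nat -> R) n B : (forall i, (i <= n)%nat -> Rabs (F i) <= B) ->
  Rabs (prod_f_R0 F n) <= B ^ S n.
Proof.
  induction n as [|n IH]; intros H.
  - simpl. rewrite Rmult_1_r. apply H; lia.
  - simpl prod_f_R0. rewrite Rabs_mult, <- tech_pow_Rmult, Rmult_comm.
    apply Rmult_le_compat; try apply Rabs_pos; [apply H; lia|apply IH; intros; apply H; lia].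
Qed.

Lemma sum_f_R0_delta (F : nat -> R) n i : (i <= n)%nat ->
  (forall j, (j <= n)%nat -> j <> i -> F j = 0) -> sum_f_R0 F n = F i.
Proof.
  induction n as [|n IH]; intros Hi H.
  - replace i with 0%nat by lia. reflexivity.
  - simpl. destruct (Nat.eq_dec i (S n)) as [->|Hne].
    + rewrite sum_eq_R0; [ring|]. intros j Hj. apply H; lia.
    + rewrite IH, (H (S n)) by (auto; lia). ring.
Qed.

Lemma deriv_on_interior g dg x :
  deriv_on g dg -> -1 < x < 1 -> derivable_pt_lim g x (dg x).
Proof.
  intros Hd Hx eps Heps.
  destruct (Hd x ltac:(lra) eps Heps) as [alp [Halp H]].
  assert (Hpos : 0 < Rmin alp (Rmin (1 - x) (x + 1))) by (repeat apply Rmin_pos; lra).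
  exists (mkposreal _ Hpos). intros h Hh0 Hh. simpl in Hh.
  pose proof (Rmin_l alp (Rmin (1 - x) (x + 1))).
  pose proof (Rmin_r alp (Rmin (1 - x) (x + 1))).
  pose proof (Rmin_l (1 - x) (x + 1)). pose proof (Rmin_r (1 - x) (x + 1)).
  assert (Hb : Rabs h < 1 - x /\ Rabs h < x + 1) by lra.
  destruct Hb as [Hb1 Hb2]. apply Rabs_def2 in Hb1. apply Rabs_def2 in Hb2.
  specialize (H (x + h)). simpl in H. unfold R_dist in H.
  replace (x + h - x) with h in H by ring.
  apply H. split; [split; lra|]. lra.
Qed.

Lemma Rolle_sorted (g g' : R -> R) :
  (forall t, -1 < t < 1 -> derivable_pt_lim g t (g' t)) ->
  forall l a, StronglySorted Rlt (a :: l) ->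
  (forall y, In y (a :: l) -> -1 < y < 1 /\ g y = 0) ->
  exists l', length l' = length l /\ StronglySorted Rlt l' /\
    (forall y, In y l' -> a < y /\ -1 < y < 1 /\ g' y = 0).
Proof.
  intros Hd l. induction l as [|b l IH]; intros a Hs Hz.
  - exists []. split; [reflexivity|]. split; [constructor|]. intros y [].
  - apply StronglySorted_inv in Hs as [Hs1 Hs2].
    assert (Hab : a < b) by (inversion Hs2; assumption).
    destruct (IH b Hs1) as [l'' [L1 [L2 L3]]]; [intros y Hy; apply Hz; right; exact Hy|].
    destruct (Hz a (or_introl eq_refl)) as [Ha1 Ha2].
    destruct (Hz b (or_intror (or_introl eq_refl))) as [Hb1 Hb2].
    destruct (MVT_cor2 g g' a b Hab) as [w [Hw1 Hw2]]; [intros t Ht; apply Hd; lra|].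
    assert (Hw : g' w = 0).
    { rewrite Ha2, Hb2 in Hw1.
      destruct (Rmult_integral (g' w) (b - a)) as [|E]; [lra|assumption|lra]. }
    exists (w :: l''). split; [simpl; rewrite L1; reflexivity|]. split.
    + constructor; [exact L2|]. apply Forall_forall. intros y Hy. destruct (L3 y Hy); lra.
    + intros y [<-|Hy]; [repeat split; lra|].
      destruct (L3 y Hy) as [? [? ?]]. repeat split; auto; lra.
Qed.

Lemma Rolle_iter_sorted k : forall D : nat -> R -> R,
  (forall j t, -1 < t < 1 -> derivable_pt_lim (D j) t (D (S j) t)) ->
  forall l, length l = S k -> StronglySorted Rlt l ->
  (forall y, In y l -> -1 < y < 1 /\ D 0%nat y = 0) ->
  exists xi, -1 < xi < 1 /\ D k xi = 0.
Proof.
  induction k as [|k IH]; intros D Hd [|a l] Hl Hs Hz; try discriminate.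
  - exists a. apply Hz. left; reflexivity.
  - destruct (Rolle_sorted (D 0%nat) (D 1%nat) (Hd 0%nat) l a Hs Hz) as [l' [L1 [L2 L3]]].
    apply (IH (fun j => D (S j)) (fun j => Hd (S j)) l'); [simpl in Hl; lia|exact L2|].
    intros y Hy. destruct (L3 y Hy) as [_ H]. exact H.
Qed.

Lemma StronglySorted_insert (a : R) : forall l, StronglySorted Rlt l -> ~ In a l ->
  exists l', Permutation (a :: l) l' /\ StronglySorted Rlt l'.
Proof.
  induction l as [|b l IH]; intros Hs Hn.
  - exists [a]. split; repeat constructor.
  - apply StronglySorted_inv in Hs as [Hs1 Hs2]. rewrite Forall_forall in Hs2.
    destruct (Rlt_or_le a b) as [Hab|Hab].
    + exists (a :: b :: l). split; [reflexivity|].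
      constructor; [constructor; [exact Hs1|apply Forall_forall; exact Hs2]|].
      constructor; [exact Hab|]. apply Forall_forall. intros y Hy. specialize (Hs2 y Hy). lra.
    + assert (a <> b) by (intro; apply Hn; left; auto).
      destruct (IH Hs1) as [l3 [P1 P2]]; [intro; apply Hn; right; auto|].
      exists (b :: l3). split; [rewrite perm_swap; apply perm_skip, P1|].
      constructor; [exact P2|]. apply Forall_forall. intros y Hy.
      apply (Permutation_in _ (Permutation_sym P1)) in Hy.
      destruct Hy as [<-|Hy]; [lra|auto].
Qed.

Lemma StronglySorted_sort (l : list R) : NoDup l ->
  exists l', Permutation l l' /\ StronglySorted Rlt l'.
Proof.
  induction l as [|a l IH]; intro Hn; [exists []; split; constructor|].
  apply NoDup_cons_iff in Hn as [Hn1 Hn2].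
  destruct (IH Hn2) as [l' [P1 P2]].
  destruct (StronglySorted_insert a l' P2) as [l'' [Q1 Q2]].
  { intro H; apply Hn1. apply (Permutation_in _ (Permutation_sym P1)), H. }
  exists l''. split; [rewrite P1; exact Q1|exact Q2].
Qed.

Lemma Rolle_iter k (D : nat -> R -> R) (l : list R) :
  (forall j t, -1 < t < 1 -> derivable_pt_lim (D j) t (D (S j) t)) ->
  NoDup l -> length l = S k ->
  (forall y, In y l -> -1 < y < 1 /\ D 0%nat y = 0) ->
  exists xi, -1 < xi < 1 /\ D k xi = 0.
Proof.
  intros Hd Hn Hl Hz. destruct (StronglySorted_sort l Hn) as [l' [P S']].
  apply (Rolle_iter_sorted k D Hd l'); [rewrite <- (Permutation_length P); exact Hl|exact S'|].
  intros y Hy. apply Hz, (Permutation_in _ (Permutation_sym P)), Hy.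
Qed.

Definition interior_nodes (z : nat -> R) (m : nat) : Prop :=
  forall i, (i <= m)%nat -> -1 < z i < 1.

Definition distinct_nodes (z : nat -> R) (m : nat) : Prop :=
  forall p q, (p <= m)%nat -> (q <= m)%nat -> p <> q -> z p <> z q.

Lemma NoDup_map_nodes z m : distinct_nodes z m -> NoDup (map z (seq 0 (S m))).
Proof.
  intro Hz. apply NoDup_map_NoDup_ForallPairs; [|apply seq_NoDup].
  intros p q Hp Hq E. apply in_seq in Hp, Hq.
  destruct (Nat.eq_dec p q) as [|Hne]; [assumption|]. exfalso. apply (Hz p q); auto; lia.
Qed.

Lemma lagrange_node z m i j : (i <= m)%nat -> (j <= m)%nat -> distinct_nodes z m ->
  lagrange z m j (z i) = if Nat.eq_dec i j then 1 else 0.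
Proof.
  intros Hi Hj Hz. unfold lagrange. destruct (Nat.eq_dec i j) as [->|Hne].
  - apply prod_f_R0_eq1. intros k Hk. destruct (Nat.eq_dec k j) as [|Hkj]; [reflexivity|].
    field. intro E. apply (Hz j k); auto. lra.
  - apply (prod_f_R0_eq0 _ m i Hi). destruct (Nat.eq_dec i j); [congruence|].
    unfold Rdiv. ring.
Qed.

Definition interpolant (z : nat -> R) (f : R -> R) (m : nat) (x : R) : R :=
  sum_f_R0 (fun i => lagrange z m i x * f (z i)) m.

Lemma interpolant_node z f m i : (i <= m)%nat -> distinct_nodes z m ->
  interpolant z f m (z i) = f (z i).
Proof.
  intros Hi Hz. unfold interpolant. rewrite (sum_f_R0_delta _ m i Hi).
  - rewrite lagrange_node by auto. destruct (Nat.eq_dec i i); [ring|congruence].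
  - intros j Hj Hji. rewrite lagrange_node by auto. destruct (Nat.eq_dec i j); [congruence|ring].
Qed.

Lemma poly_le_interpolant z f m : poly_le m (interpolant z f m).
Proof.
  apply (poly_le_sum m (fun i x => lagrange z m i x * f (z i))). intros i Hi.
  apply (poly_le_ext _ (fun x => f (z i) * lagrange z m i x)); [intro; ring|].
  apply poly_le_scal, poly_le_lagrange, Hi.
Qed.

Section Interpolation_error.

Variables (f : R -> R) (df : nat -> R -> R).
Hypothesis df0 : forall x, -1 <= x <= 1 -> df 0%nat x = f x.
Hypothesis dfS : forall n, deriv_on (df n) (df (S n)).

Variables (z : nat -> R) (m : nat).
Hypothesis z_interior : interior_nodes z m.
Hypothesis z_distinct : distinct_nodes z m.

(* Cauchy's remainder: [f - P] minus the right multiple of the node polynomial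
   has [m + 2] zeros, so its [(m + 1)]-st derivative vanishes somewhere. *)
Lemma interpolant_error x : -1 < x < 1 ->
  exists xi, -1 < xi < 1 /\
    f x - interpolant z f m x = df (S m) xi / INR (Factorial.fact (S m)) * node_poly z m x.
Proof.
  intro Hx.
  destruct (classic (exists i, (i <= m)%nat /\ x = z i))
    as [[i [Hi ->]]|Hnode].
  - exists (z i). split; [exact Hx|].
    rewrite interpolant_node by auto. unfold node_poly.
    rewrite (prod_f_R0_eq0 _ m i Hi) by ring. ring.
  - set (w := node_poly z m x).
    assert (Hw : w <> 0).
    { apply prod_f_R0_neq0. intros j Hj E. apply Hnode. exists j. split; [exact Hj|lra]. }
    set (K := (f x - interpolant z f m x) / w).
    destruct (poly_le_interpolant z f m) as [DP [HP [HP0 HPk]]].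
    destruct (poly_le_dn_node_poly z m) as [DW [HW [HW0 [HWm HWk]]]].
    set (DE := fun k t => df k t - DP k t - K * DW k t).
    assert (HDE : forall j t, -1 < t < 1 -> derivable_pt_lim (DE j) t (DE (S j) t)).
    { intros j t Ht.
      apply (derivable_pt_lim_minus (fun t => df j t - DP j t) (fun t => K * DW j t)).
      - apply (derivable_pt_lim_minus (df j) (DP j)); [apply deriv_on_interior; auto|apply HP].
      - apply (derivable_pt_lim_scal (DW j)), HW. }
    assert (Hzeros : forall y, In y (x :: map z (seq 0 (S m))) -> -1 < y < 1 /\ DE 0%nat y = 0).
    { intros y [<-|Hy]; split; [exact Hx| | |].
      - unfold DE. rewrite df0, HP0, HW0 by lra. fold w. unfold K. field. exact Hw.
      - apply in_map_iff in Hy as [j [<- Hj]]. apply in_seq in Hj. apply z_interior. lia.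
      - apply in_map_iff in Hy as [j [<- Hj]]. apply in_seq in Hj.
        assert (Hj' : (j <= m)%nat) by lia. pose proof (z_interior j Hj').
        unfold DE. rewrite df0, HP0, HW0, interpolant_node by (auto; lra).
        unfold node_poly. rewrite (prod_f_R0_eq0 _ m j Hj') by ring. ring. }
    destruct (Rolle_iter (S m) DE (x :: map z (seq 0 (S m)))) as [xi [Hxi HDExi]].
    + exact HDE.
    + constructor; [|apply NoDup_map_nodes, z_distinct].
      intro Hin. apply in_map_iff in Hin as [j [Hj1 Hj2]]. apply in_seq in Hj2.
      apply Hnode. exists j. split; [lia|auto].
    + simpl. rewrite length_map, length_seq. reflexivity.
    + exact Hzeros.
    + exists xi. split; [exact Hxi|].
      unfold DE in HDExi. rewrite HPk, HWm in HDExi by lia.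
      pose proof (INR_fact_lt_0 (S m)).
      replace (df (S m) xi) with (K * INR (Factorial.fact (S m))) by lra.
      fold w. unfold K. field. split; lra.
Qed.

Lemma interpolant_error_bound A x :
  (forall x, -1 <= x <= 1 -> Rabs (df (S m) x) <= A) -> -1 < x < 1 ->
  Rabs (f x - interpolant z f m x) <= A * 2 ^ S m / INR (Factorial.fact (S m)).
Proof.
  intros HA Hx. destruct (interpolant_error x Hx) as [xi [Hxi ->]].
  pose proof (INR_fact_lt_0 (S m)).
  assert (Hw : Rabs (node_poly z m x) <= 2 ^ S m).
  { apply Rabs_prod_f_R0_le. intros j Hj. specialize (z_interior j Hj). apply Rabs_le. lra. }
  rewrite Rabs_mult. unfold Rdiv. rewrite Rabs_mult, (Rabs_right (/ _)) by
    (left; apply Rinv_0_lt_compat; lra).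
  replace (A * 2 ^ S m * / INR (Factorial.fact (S m)))
    with (A * / INR (Factorial.fact (S m)) * 2 ^ S m) by ring.
  apply Rmult_le_compat; [|apply Rabs_pos| |exact Hw].
  - apply Rmult_le_pos; [apply Rabs_pos|left; apply Rinv_0_lt_compat; lra].
  - apply Rmult_le_compat_r; [left; apply Rinv_0_lt_compat; lra|]. apply HA. lra.
Qed.

End Interpolation_error.

Lemma Rint_RInt g a b : ex_RInt g a b -> Rint g a b = RInt g a b.
Proof.
  intro H. unfold Rint.
  destruct (epsilon_spec (inhabits 0)
     (fun I => exists pr : Riemann_integrable g a b, RiemannInt pr = I)) as [pr <-].
  { exists (RiemannInt (ex_RInt_Reals_0 _ _ _ H)). eexists. reflexivity. }
  symmetry. apply RInt_Reals.
Qed.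

Lemma poly_le_ex_RInt d g a b : poly_le d g -> ex_RInt g a b.
Proof.
  intros [D [HD [H0 _]]]. apply (@ex_RInt_continuous R_CompleteNormedModule). intros t _.
  apply (continuous_ext (D 0%nat)); [exact H0|].
  apply continuity_pt_filterlim, derivable_continuous_pt. exists (D 1%nat t). apply HD.
Qed.

Lemma ex_RInt_mulr (F : R -> R) c a b : ex_RInt F a b -> ex_RInt (fun x => F x * c) a b.
Proof.
  intro H. apply (@ex_RInt_ext R_NormedModule (fun x => scal c (F x))).
  - intros x _. apply Rmult_comm.
  - apply (@ex_RInt_scal R_NormedModule), H.
Qed.

Lemma RInt_mulr (F : R -> R) c a b : ex_RInt F a b ->
  RInt (fun x => F x * c) a b = RInt F a b * c.
Proof.
  intro H. rewrite (@RInt_ext R_CompleteNormedModule _ (fun x => scal c (F x)))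
    by (intros x _; apply Rmult_comm).
  rewrite (@RInt_scal R_CompleteNormedModule F) by exact H. apply Rmult_comm.
Qed.

Lemma RInt_sum_f_R0 (F : nat -> R -> R) (w : nat -> R) n a b :
  (forall i, (i <= n)%nat -> ex_RInt (F i) a b) ->
  RInt (fun x => sum_f_R0 (fun i => F i x * w i) n) a b
  = sum_f_R0 (fun i => RInt (F i) a b * w i) n.
Proof.
  induction n as [|n IH]; intro HF; [apply RInt_mulr, HF; lia|].
  assert (Hex : ex_RInt (fun x => sum_f_R0 (fun i => F i x * w i) n) a b).
  { clear IH. induction n as [|n IHn]; [apply ex_RInt_mulr, HF; lia|].
    apply (@ex_RInt_plus R_NormedModule);
      [apply IHn; intros; apply HF; lia|apply ex_RInt_mulr, HF; lia]. }
  simpl sum_f_R0.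
  rewrite (@RInt_plus R_CompleteNormedModule (fun x => sum_f_R0 (fun i => F i x * w i) n)
             (fun x => F (S n) x * w (S n))); [|exact Hex|apply ex_RInt_mulr, HF; lia].
  rewrite IH, RInt_mulr by (intros; apply HF; lia). reflexivity.
Qed.

Lemma quadrature_RInt z f m xk :
  sum_f_R0 (fun i => qweight z m i xk * f (z i)) m = RInt (interpolant z f m) (-1) xk.
Proof.
  assert (Hex : forall i, (i <= m)%nat -> ex_RInt (lagrange z m i) (-1) xk)
    by (intros i Hi; apply (poly_le_ex_RInt m), poly_le_lagrange, Hi).
  unfold interpolant. rewrite RInt_sum_f_R0 by exact Hex.
  apply sum_eq. intros i Hi. unfold qweight. rewrite Rint_RInt by (apply Hex, Hi). reflexivity.
Qed.

Lemma Rabs_RInt_le_const_open h a b B : a <= b -> ex_RInt h a b ->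
  (forall t, a < t < b -> Rabs (h t) <= B) -> Rabs (RInt h a b) <= (b - a) * B.
Proof.
  intros Hab Hex Hb.
  assert (Hc : forall c : R, RInt (fun _ => c) a b = (b - a) * c)
    by (intro c; apply (@RInt_const R_CompleteNormedModule)).
  assert (Hcex : forall c : R, ex_RInt (fun _ => c) a b)
    by (intro c; apply (@ex_RInt_const R_NormedModule)).
  assert (RInt h a b <= RInt (fun _ => B) a b).
  { apply RInt_le; auto. intros t Ht. specialize (Hb t Ht). apply Rabs_le_between in Hb. lra. }
  assert (RInt (fun _ => - B) a b <= RInt h a b).
  { apply RInt_le; auto. intros t Ht. specialize (Hb t Ht). apply Rabs_le_between in Hb. lra. }
  rewrite !Hc in *. apply Rabs_le. lra.
Qed.

Lemma quadrature_diff_bound f df A xk m z c :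
  (forall x, -1 <= x <= 1 -> df 0%nat x = f x) ->
  (forall n, deriv_on (df n) (df (S n))) ->
  (forall x, -1 <= x <= 1 -> Rabs (df (S m) x) <= A) ->
  -1 <= xk <= 1 ->
  interior_nodes z m -> distinct_nodes z m ->
  interior_nodes c m -> distinct_nodes c m ->
  Rabs (sum_f_R0 (fun i => qweight z m i xk * f (z i)) m
        - sum_f_R0 (fun i => qweight c m i xk * f (c i)) m)
  <= (xk + 1) * (2 * (A * 2 ^ S m / INR (Factorial.fact (S m)))).
Proof.
  intros Hf0 Hdf HA Hxk Hz_in Hz_inj Hc_in Hc_inj.
  rewrite !quadrature_RInt.
  assert (Ez := poly_le_ex_RInt _ _ (-1) xk (poly_le_interpolant z f m)).
  assert (Ec := poly_le_ex_RInt _ _ (-1) xk (poly_le_interpolant c f m)).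
  rewrite <- (@RInt_minus R_CompleteNormedModule) by assumption.
  replace (xk + 1) with (xk - -1) by ring.
  apply Rabs_RInt_le_const_open; [lra|apply (@ex_RInt_minus R_NormedModule); assumption|].
  intros t Ht.
  change (Rabs (interpolant z f m t - interpolant c f m t)
          <= 2 * (A * 2 ^ S m / INR (Factorial.fact (S m)))).
  replace (interpolant z f m t - interpolant c f m t)
    with ((f t - interpolant c f m t) - (f t - interpolant z f m t)) by ring.
  eapply Rle_trans; [apply Rabs_triang|]. rewrite Rabs_Ropp.
  pose proof (interpolant_error_bound f df Hf0 Hdf z m Hz_in Hz_inj A t HA ltac:(lra)).
  pose proof (interpolant_error_bound f df Hf0 Hdf c m Hc_in Hc_inj A t HA ltac:(lra)).
  lra.
Qed.

Lemma Gegen_zeros_nodes m al z : -1/2 < al -> zeros_of (S m) al z ->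
  interior_nodes z m /\ distinct_nodes z m.
Proof.
  intros Hal [Hd Hz]. split.
  - intros i Hi. apply (Gegen_root_interior (S m) al); [exact Hal|apply Hz; lia].
  - intros p q Hp Hq Hpq. apply Hd; lia || exact Hpq.
Qed.

Lemma Un_cv_0_le (u v : nat -> R) : (forall n, Rabs (u n) <= v n) -> Un_cv v 0 -> Un_cv u 0.
Proof.
  intros Huv Hv eps Heps. destruct (Hv eps Heps) as [N HN]. exists N. intros n Hn.
  specialize (HN n Hn). specialize (Huv n). unfold R_dist in *. rewrite Rminus_0_r in *.
  pose proof (Rle_abs (v n)). lra.
Qed.

Lemma Un_cv_scal_0 k (v : nat -> R) : Un_cv v 0 -> Un_cv (fun n => k * v n) 0.
Proof.
  intro Hv. rewrite <- (Rmult_0_r k). apply CV_mult; [|exact Hv].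
  intros eps Heps. exists 0%nat. intros n _.
  unfold R_dist. rewrite Rminus_diag, Rabs_R0. exact Heps.
Qed.

Lemma Un_cv_pow_fact_S x : Un_cv (fun m => x ^ S m / INR (Factorial.fact (S m))) 0.
Proof.
  intros eps Heps. destruct (cv_speed_pow_fact x eps Heps) as [N HN].
  exists N. intros n Hn. apply HN. lia.
Qed.

Theorem theorem8 (f : R -> R) (A : R) (df : nat -> R -> R) (xk : R)
    (astar : nat -> R) (z c : nat -> nat -> R) :
  0 < A ->
  (forall x, -1 <= x <= 1 -> df 0%nat x = f x) ->
  (forall n, deriv_on (df n) (df (S n))) ->
  (forall n x, -1 <= x <= 1 -> Rabs (df (S n) x) <= A) ->
  -1 <= xk <= 1 ->
  (forall m, is_argmin_eta m xk (astar m)) ->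
  (forall m, zeros_of (S m) (astar m) (z m)) ->
  (forall m, zeros_of (S m) 0 (c m)) ->
  Un_cv (fun m =>
      sum_f_R0 (fun i => qweight (z m) m i xk * f (z m i)) m
    - sum_f_R0 (fun i => qweight (c m) m i xk * f (c m i)) m) 0.
Proof.
  intros _ Hf0 Hdf HA Hxk Hargmin Hz Hc.
  apply (Un_cv_0_le _ (fun m => (xk + 1) * (2 * A) * (2 ^ S m / INR (Factorial.fact (S m))))).
  - intro m.
    destruct (Gegen_zeros_nodes m (astar m) (z m) (proj1 (Hargmin m)) (Hz m)) as [Hz1 Hz2].
    destruct (Gegen_zeros_nodes m 0 (c m) ltac:(lra) (Hc m)) as [Hc1 Hc2].
    eapply Rle_trans; [apply (quadrature_diff_bound f df A); eauto|].
    right. unfold Rdiv. ring.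
  - apply Un_cv_scal_0, Un_cv_pow_fact_S.
Qed.
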